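(* Let $q\ge1$, $d\ge1$, and $\mathcal{D}=\{(b_1,B_1),\ldots,(b_d,B_d)\}\subseteq[q]\times2^{[q]}$ with $|B_i|\ge2$ for all $i\in[d]$. Then $\mathcal{E}_{\mathcal{D}}=\mathcal{E}_{\mathcal{D}^\circ}=\mathcal{E}_{\overline{\mathcal{D}}}=\mathcal{E}_{\min(\mathcal{D})}=\mathcal{E}_{\min(\overline{\mathcal{D}})}=\mathcal{E}_{\min(\mathcal{D}^\circ)}$.
   Context: With $\Lambda=[q]$: a pair $(b,B)$ is trivial if $b\in B$; $(b,B)^{\sf ex}=\{(b,C):B\subseteq C\subseteq\Lambda\}$; $(b,B)\circ(c,C)=(b,(B\smallsetminus\{c\})\cup C)$; for a set $\mathcal{D}$ of pairs, $\mathcal{D}^\circ$ is the set of all compositions $(c_1,C_1)\circ\cdots\circ(c_s,C_s)$, $s\ge1$, $(c_i,C_i)\in\mathcal{D}$, with all possible bracketings; $\mathcal{D}^{\sf ex}$ is the union of extensions of elements of $\mathcal{D}$; $\Lambda^{\sf triv}=\{(b,B):b\in B\}$; $\overline{\mathcal{D}}=(\mathcal{D}^\circ)^{\sf ex}\cup\Lambda^{\sf triv}$; $\min(\mathcal{D})$ is the set of nontrivial $(b,B)\in\mathcal{D}$ such that no $(b,C)\in\mathcal{D}$ has $C\subsetneq B$. $\mathcal{D}$-extremal ideals: $S_{[q]}=\mathsf k[y_A:\emptyset\ne A\subseteq[q]]$ over a field $\mathsf k$; for $\mathcal{D}'\subseteq[q]\times(2^{[q]}\smallsetminus\{\emptyset\})$,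 $Q(\mathcal{D}')=\{A\subseteq[q]:A\ne\emptyset,\ A\cap B\ne\emptyset\text{ for all }(b,B)\in\mathcal{D}'\text{ with }b\in A\}$, $\varepsilon_{\mathcal{D}',i}=\prod_{A\in Q(\mathcal{D}'),\,i\in A}y_A$, and $\mathcal{E}_{\mathcal{D}'}=(\varepsilon_{\mathcal{D}',1},\ldots,\varepsilon_{\mathcal{D}',q})$. *)

From HB Require Import structures.
From mathcomp Require Import all_boot all_algebra.
From mathcomp Require Import mpoly.
From Stdlib Require Import ClassicalDescription.

Set Implicit Arguments.
Unset Strict Implicit.
Unset Printing Implicit Defensive.

Import GRing.Theory.
Local Open Scope ring_scope.

Definition decP (P : Prop) : bool :=
  if excluded_middle_informative P then true else false.

(* Pairs (b,B) with b in Lambda = [q] (encoded as 'I_q) and B a subset. *)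
Definition Pr (q : nat) : finType := ('I_q * {set 'I_q})%type.

Definition trivial_pair (q : nat) (p : Pr q) : bool := p.1 \in p.2.

Definition ext_pair (q : nat) (p : Pr q) : {set Pr q} :=
  [set r : Pr q | (r.1 == p.1) && (p.2 \subset r.2)].

Definition comp_pair (q : nat) (p r : Pr q) : Pr q :=
  (p.1, (p.2 :\ r.1) :|: r.2).

Inductive in_circ (q : nat) (D : {set Pr q}) : Pr q -> Prop :=
  | in_circ_base p : p \in D -> in_circ D p
  | in_circ_comp p r : in_circ D p -> in_circ D r -> in_circ D (comp_pair p r).

Definition circ (q : nat) (D : {set Pr q}) : {set Pr q} :=
  [set p | decP (in_circ D p)].

Definition ext (q : nat) (D : {set Pr q}) : {set Pr q} :=
  \bigcup_(p in D) ext_pair p.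

Definition triv (q : nat) : {set Pr q} := [set p : Pr q | trivial_pair p].

Definition closureD (q : nat) (D : {set Pr q}) : {set Pr q} :=
  ext (circ D) :|: triv q.

Definition minD (q : nat) (D : {set Pr q}) : {set Pr q} :=
  [set p in D | ~~ trivial_pair p &&
     [forall r in D, ~~ ((r.1 == p.1) && (r.2 \proper p.2))]].

Definition NE (q : nat) : finType := {A : {set 'I_q} | A != set0}.

(* S_[q] = k[y_A : A nonempty] *)
Definition S (k : fieldType) (q : nat) := {mpoly k[#|{: NE q}|]}.

Definition y (k : fieldType) (q : nat) (A : NE q) : S k q := 'X_(enum_rank A).

Definition Qset (q : nat) (D : {set Pr q}) : {set NE q} :=
  [set A : NE q | [forall p in D, (p.1 \in val A) ==> (val A :&: p.2 != set0)]].

Definition eps (k : fieldType) (q : nat) (D : {set Pr q}) (i : 'I_q) : S k q :=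
  \prod_(A in Qset D | i \in val A) y k A.

(* The ideal E_{D'} = (eps_1, ..., eps_q) of S_[q], as a membership predicate. *)
Definition E (k : fieldType) (q : nat) (D : {set Pr q}) : S k q -> Prop :=
  fun f => exists c : 'I_q -> S k q, f = \sum_(i < q) c i * eps k D i.

Definition same_ideal (R : Type) (I J : R -> Prop) : Prop :=
  forall f, I f <-> J f.

Arguments y k {q} A.
Arguments eps k {q} D i.
Arguments E k {q} D f.

From Pilot Require Import Defs.
From mathcomp Require Import all_boot all_algebra.
From mathcomp Require Import mpoly.
From Stdlib Require Import ClassicalDescription.

Set Implicit Arguments.
Unset Strict Implicit.
Unset Printing Implicit Defensive.

(* The generators eps_{D',i} of E_{D'} depend on D' only through Q(D'), so it
   suffices to show that Q(D) = Q(D^o) = Q(closure of D) = Q(min(D)).  A set A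
   belongs to Q(D') iff it "hits" every pair (b,B) of D' (b in A implies A meets
   B), and the pairs hit by a fixed A are closed under composition, extension,
   and contain every trivial pair; every nontrivial pair of D' extends a pair of
   min(D'). *)

Lemma decPP (P : Prop) : reflect P (Defs.decP P).
Proof. by rewrite /Defs.decP; case: excluded_middle_informative => h; constructor. Qed.

Lemma in_circP q (D : {set Pr q}) p : reflect (in_circ D p) (p \in circ D).
Proof. by rewrite inE; apply: decPP. Qed.

Definition hits q (A : NE q) (p : Pr q) : bool :=
  (p.1 \in val A) ==> (val A :&: p.2 != set0).

Lemma in_Qset q (D : {set Pr q}) A : (A \in Qset D) = [forall p in D, hits A p].
Proof. by rewrite inE. Qed.

Section Hits.

Variables (q : nat) (A : NE q).

Lemma hits_comp p r : hits A p -> hits A r -> hits A (comp_pair p r).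
Proof.
move=> /implyP hitp /implyP hitr; apply/implyP => /= pA.
case/set0Pn: (hitp pA) => x /setIP [xA xp].
have [xr1|xNr] := eqVneq x r.1.
  subst x; case/set0Pn: (hitr xA) => z /setIP [zA zr].
  by apply/set0Pn; exists z; rewrite inE zA in_setU zr orbT.
by apply/set0Pn; exists x; rewrite inE xA in_setU in_setD1 xNr xp.
Qed.

Lemma hits_ext r p : hits A r -> p \in ext_pair r -> hits A p.
Proof.
move=> /implyP hitr; rewrite inE => /andP [/eqP p1 /subsetP sub].
apply/implyP; rewrite p1 => /hitr /set0Pn [x /setIP [xA xr]].
by apply/set0Pn; exists x; rewrite inE xA sub.
Qed.

Lemma hits_trivial p : trivial_pair p -> hits A p.
Proof. by move=> p1p2; apply/implyP => p1A; apply/set0Pn; exists p.1; rewrite inE p1A. Qed.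

End Hits.

Lemma Qset_subset q (X Y : {set Pr q}) :
  (forall A, {in X, forall r, hits A r} -> {in Y, forall p, hits A p}) ->
  Qset X \subset Qset Y.
Proof.
move=> hitXY; apply/subsetP => A; rewrite !in_Qset => /forall_inP hitX.
exact/forall_inP/hitXY.
Qed.

Lemma Qset_antimono q (X Y : {set Pr q}) : X \subset Y -> Qset Y \subset Qset X.
Proof. by move=> /subsetP sXY; apply: Qset_subset => A hitY p /sXY /hitY. Qed.

Lemma Qset_circ q (D : {set Pr q}) : Qset (circ D) = Qset D.
Proof.
apply/eqP; rewrite eqEsubset; apply/andP; split.
  by apply/Qset_antimono/subsetP => p pD; apply/in_circP; constructor.
apply: Qset_subset => A hitD p /in_circP.
by elim=> [r /hitD | r s _ hitr _ hits_] //; apply: hits_comp.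
Qed.

Lemma Qset_closureD q (D : {set Pr q}) : Qset (closureD D) = Qset D.
Proof.
rewrite -(Qset_circ D); apply/eqP; rewrite eqEsubset; apply/andP; split.
  apply/Qset_antimono/subsetP => p pD; rewrite in_setU; apply/orP; left.
  by apply/bigcupP; exists p; rewrite // inE eqxx subxx.
apply: Qset_subset => A hitD p; rewrite in_setU => /orP [/bigcupP [r rD]|].
  exact/hits_ext/hitD.
by rewrite inE; apply: hits_trivial.
Qed.

Lemma minD_below q (D : {set Pr q}) p :
  p \in D -> ~~ trivial_pair p -> exists2 r, r \in minD D & p \in ext_pair r.
Proof.
move=> pD pNtriv.
pose below := [pred r : Pr q | (r \in D) && (p \in ext_pair r)].
have below_p : below p by rewrite /= pD inE eqxx subxx.
case: (arg_minnP (fun r : Pr q => #|r.2|) below_p) => r /andP [rD pr] rmin.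
exists r => //; move: pr; rewrite !inE rD /= => /andP [/eqP r1 /subsetP r2p].
apply/andP; split.
  by apply: contra pNtriv; rewrite /trivial_pair r1 => /r2p.
apply/forall_inP => s sD; apply/negP => /andP [/eqP s1 /[dup] sr /proper_card].
apply/negP; rewrite -leqNgt; apply: rmin.
rewrite /= sD inE s1 r1 eqxx /=.
by apply: subset_trans (proper_sub sr) _; apply/subsetP.
Qed.

Lemma Qset_minD q (D : {set Pr q}) : Qset (minD D) = Qset D.
Proof.
apply/eqP; rewrite eqEsubset; apply/andP; split; last first.
  by apply/Qset_antimono/subsetP => p; rewrite inE => /andP [].
apply: Qset_subset => A hitmin p pD.
have [ptriv|pNtriv] := boolP (trivial_pair p); first exact: hits_trivial.
by have [r /hitmin hitr] := minD_below pD pNtriv; apply: hits_ext.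
Qed.

Lemma Qset_same_ideal k q (X Y : {set Pr q}) :
  Qset X = Qset Y -> same_ideal (E k X) (E k Y).
Proof. by move=> QXY f; rewrite /E /eps QXY. Qed.

Theorem lemma3p10 (k : fieldType) (q : nat) (D : {set Pr q}) :
  (0 < q)%N -> (0 < #|D|)%N -> (forall p, p \in D -> (2 <= #|p.2|)%N) ->
  same_ideal (E k D) (E k (circ D)) /\
  same_ideal (E k D) (E k (closureD D)) /\
  same_ideal (E k D) (E k (minD D)) /\
  same_ideal (E k D) (E k (minD (closureD D))) /\
  same_ideal (E k D) (E k (minD (circ D))).
Proof.
move=> _ _ _.
by split; [|split; [|split; [|split]]]; apply: Qset_same_ideal;
  rewrite ?Qset_minD ?Qset_closureD ?Qset_circ.
Qed.
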